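(* Let $(\gamma_\nu)_{\nu\ge 0}$ be complex numbers, let $f(z)=\sum_{\nu=0}^{\infty}\gamma_\nu z^\nu$ be the corresponding formal power series, and let $f_n(z)=\sum_{\nu=0}^{n}\gamma_\nu z^\nu$. Work in the field $\mathbb{C}((z))$ of formal Laurent series. Define numbers $\mathcal{C}_k^{(n)}$ by $\mathcal{C}_0^{(n)}=-\gamma_{n+1}$ and $\mathcal{C}_{k+1}^{(n)}=\mathcal{C}_k^{(n+3)}-\dfrac{\mathcal{C}_k^{(n+2)}\bigl\{2\mathcal{C}_k^{(n)}\mathcal{C}_k^{(n+2)}-[\mathcal{C}_k^{(n+1)}]^2\bigr\}}{\mathcal{C}_k^{(n)}\mathcal{C}_k^{(n+1)}}$ for $k,n\in\mathbb{N}_0$, and assume $\mathcal{C}_k^{(n)}\neq0$ for all $k,n\in\mathbb{N}_0$. Let $\mathcal{J}_k^{(n)}$ be the iterated theta algorithm applied to $s_n=f_n(z)$: $\mathcal{J}_0^{(n)}=f_n(z)$, $\mathcal{J}_{k+1}^{(n)}=\mathcal{J}_k^{(n+1)}-\dfrac{[\Delta\mathcal{J}_k^{(n)}][\Delta\mathcal{J}_k^{(n+1)}][\Delta^2\mathcal{J}_k^{(n+1)}]}{[\Delta\mathcal{J}_k^{(n+2)}][\Delta^2\mathcal{J}_k^{(n)}]-[\Delta\mathcal{J}_k^{(n)}][\Delta^2\mathcal{J}_k^{(n+1)}]}$, where $\Delta$ acts on the superscript, $\Delta\mathcal{J}_k^{(n)}=\mathcal{J}_k^{(n+1)}-\mathcal{J}_k^{(n)}$.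 Then all $\mathcal{J}_k^{(n)}$ are well defined elements of $\mathbb{C}[[z]]$, and for all $k,n\in\mathbb{N}_0$: (i) $\mathcal{J}_k^{(n)}=f(z)+z^{n+3k+1}\mathcal{R}_k^{(n)}(z)$ with $\mathcal{R}_k^{(n)}(z)\in\mathbb{C}[[z]]$ having constant term $\mathcal{C}_k^{(n)}$; in particular $f(z)-\mathcal{J}_k^{(n)}=O(z^{n+3k+1})$; (ii) $\mathcal{J}_k^{(n)}=f_{n+3k}(z)+\mathcal{G}_k^{(n)}z^{n+3k+1}+O(z^{n+3k+2})$, where $\mathcal{G}_k^{(n)}=\mathcal{C}_k^{(n)}+\gamma_{n+3k+1}$ and $\mathcal{G}_0^{(n)}=0$, $\mathcal{G}_1^{(n)}=-\gamma_{n+3}\bigl\{\gamma_{n+2}^2-2\gamma_{n+1}\gamma_{n+3}\bigr\}/(\gamma_{n+1}\gamma_{n+2})$, and $\mathcal{G}_{k+1}^{(n)}=\mathcal{G}_k^{(n+3)}-F_{k+1}^{(n)}/H_{k+1}^{(n)}$ with $F_{k+1}^{(n)}=\bigl[\gamma_{n+3k+3}-\mathcal{G}_k^{(n+2)}\bigr]\Bigl\{\bigl[\gamma_{n+3k+2}-\mathcal{G}_k^{(n+1)}\bigr]^2-2\bigl[\gamma_{n+3k+1}-\mathcal{G}_k^{(n)}\bigr]\bigl[\gamma_{n+3k+3}-\mathcal{G}_k^{(n+2)}\bigr]\Bigr\}$ and $H_{k+1}^{(n)}=\bigl[\gamma_{n+3k+1}-\mathcal{G}_k^{(n)}\bigr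]\bigl[\gamma_{n+3k+2}-\mathcal{G}_k^{(n+1)}\bigr]$.
   Context: $\mathbb{N}_0=\{0,1,2,\dots\}$. $O(z^m)$ denotes an element of $z^m\mathbb{C}[[z]]$. The number $\mathcal{G}_k^{(n)}$ is interpreted as the prediction for the coefficient $\gamma_{n+3k+1}$, the first coefficient not used in computing $\mathcal{J}_k^{(n)}$ (which uses $f_n,\dots,f_{n+3k}$). *)

From HB Require Import structures.
From mathcomp Require Import all_boot all_order all_algebra.
From mathcomp Require Import complex.
From mathcomp Require Import reals Rstruct.
Set Implicit Arguments. Unset Strict Implicit. Unset Printing Implicit Defensive.
Import Order.TTheory GRing.Theory Num.Theory.
Local Open Scope ring_scope.

Definition C : fieldType := (Rdefinitions.R)[i].

(** Formal power series in C[[z]], represented by their coefficient sequences: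
    s i is the coefficient of z^i. *)
Definition series := nat -> C.

Definition szero : series := fun _ => 0.
Definition sadd (a b : series) : series := fun m => a m + b m.
Definition sopp (a : series) : series := fun m => - a m.
Definition ssub (a b : series) : series := fun m => a m - b m.
Definition smul (a b : series) : series :=
  fun m => \sum_(i < m.+1) a i * b (m - i)%N.
Definition smono (c : C) (e : nat) : series := fun m => if m == e then c else 0.
Definition sshift (e : nat) (a : series) : series :=
  fun m => if (e <= m)%N then a (m - e)%N else 0.
Definition sO (m : nat) (s : series) : Prop := forall i, (i < m)%N -> s i = 0.

Definition fser (g : nat -> C) : series := g.
Definition fpart (g : nat -> C) (n : nat) : series :=
  fun m => if (m <= n)%N then g m else 0.

Fixpoint Ccoef (g : nat -> C) (k : nat) : nat -> C :=
  match k with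
  | 0 => fun n => - g n.+1
  | k'.+1 => fun n =>
      let c := Ccoef g k' in
      c (n + 3)%N -
      c (n + 2)%N * (2 * c n * c (n + 2)%N - (c (n + 1)%N) ^+ 2)
        / (c n * c (n + 1)%N)
  end.

Definition Gcoef (g : nat -> C) (k n : nat) : C := Ccoef g k n + g (n + 3 * k + 1)%N.

Definition Fcoef (g : nat -> C) (k n : nat) : C :=
  (g (n + 3 * k + 3)%N - Gcoef g k (n + 2))
  * ((g (n + 3 * k + 2)%N - Gcoef g k (n + 1)) ^+ 2
     - 2 * (g (n + 3 * k + 1)%N - Gcoef g k n) * (g (n + 3 * k + 3)%N - Gcoef g k (n + 2))).
Definition Hcoef (g : nat -> C) (k n : nat) : C :=
  (g (n + 3 * k + 1)%N - Gcoef g k n) * (g (n + 3 * k + 2)%N - Gcoef g k (n + 1)).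

(** Ingredients of one step of the theta algorithm applied to a column
    T : nat -> series (T n = J_k^(n) for fixed k).  Delta acts on n. *)
Definition dlt (T : nat -> series) (n : nat) : series := ssub (T n.+1) (T n).
Definition dlt2 (T : nat -> series) (n : nat) : series := ssub (dlt T n.+1) (dlt T n).
Definition theta_num (T : nat -> series) (n : nat) : series :=
  smul (smul (dlt T n) (dlt T n.+1)) (dlt2 T n.+1).
Definition theta_den (T : nat -> series) (n : nat) : series :=
  ssub (smul (dlt T n.+2) (dlt2 T n)) (smul (dlt T n) (dlt2 T n.+1)).

From HB Require Import structures.
From mathcomp Require Import all_boot all_order all_algebra.
From mathcomp Require Import ring zify.
From Stdlib Require Import FunctionalExtensionality.
Import Order.TTheory GRing.Theory Num.Theory.
Local Open Scope ring_scope.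

(* Write a column of the theta table as [T n = f + z^(n+m) R n].  Every
   ingredient of the theta step is a difference, so [f] cancels: Delta T and
   Delta^2 T are [z^(n+m)] times series in the [R]'s, the numerator is
   [z^(3(n+m)+2)] times a series and the denominator is [z^(2(n+m)+1)] times a
   series [D] with [D(0) = R n (0) * R (n+1) (0)], nonzero by hypothesis.  The
   next column is therefore [f + z^(n+m+1) (R (n+1) - N/D)], and expanding the
   first three coefficients shows that [R (n+1) D - N] vanishes to order 2 and
   that its z^2-coefficient divided by [D(0)] is exactly the recursion defining
   [C_k^(n)].  So each step raises the order of contact with [f] by 3 and the
   leading coefficients of the remainders are the [C_k^(n)]. *)

Lemma smul_rev (a b : series) m :
  smul a b m = \sum_(i < m.+1) a (m - i)%N * b i.
Proof.
rewrite /smul (reindex_inj rev_ord_inj) /=.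
by apply: eq_bigr => j _; rewrite (sub_ordK j).
Qed.

Lemma smulC (a b : series) : smul a b = smul b a.
Proof.
apply: functional_extensionality => m; rewrite smul_rev /smul.
by apply: eq_bigr => i _; rewrite mulrC.
Qed.

Lemma smulA (a b c : series) : smul a (smul b c) = smul (smul a b) c.
Proof.
apply: functional_extensionality => i.
rewrite {1}/smul smul_rev.
pose coef3 j k := a j * (b (i - j - k)%N * c k).
transitivity (\sum_(j < i.+1) \sum_(k < i.+1 | (k <= i - j)%N) coef3 j k).
  apply: eq_bigr => /= j _; rewrite smul_rev big_distrr /=.
  by rewrite (big_ord_narrow_leq (leq_subr _ _)).
rewrite (exchange_big_dep predT) //=; apply: eq_bigr => k _.
transitivity (\sum_(j < i.+1 | (j <= i - k)%N) coef3 j k).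
  apply: eq_bigl => j; rewrite -ltnS -(ltnS j) -!subSn ?leq_ord //.
  by rewrite -subn_gt0 -(subn_gt0 j) -!subnDA addnC.
rewrite (big_ord_narrow_leq (leq_subr _ _)) /smul big_distrl /=.
by apply: eq_bigr => j _; rewrite /coef3 -!subnDA addnC mulrA.
Qed.

Lemma smulDl (a b c : series) : smul (sadd a b) c = sadd (smul a c) (smul b c).
Proof.
apply: functional_extensionality => m; rewrite /smul /sadd -big_split.
by apply: eq_bigr => i _; rewrite mulrDl.
Qed.

Lemma smul1r (a : series) : smul a (smono 1 0) = a.
Proof.
apply: functional_extensionality => m; rewrite smul_rev big_ord_recl subn0.
by rewrite big1 ?addr0 ?mulr1 // => i _; rewrite /smono mulr0.
Qed.

Lemma smul_coef0 (a b : series) : smul a b 0 = a 0%N * b 0%N.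
Proof. by rewrite /smul big_ord1. Qed.

Lemma smul_coef1 (a b : series) : smul a b 1 = a 0%N * b 1%N + a 1%N * b 0%N.
Proof. by rewrite /smul !big_ord_recl big_ord0 /= addr0. Qed.

Lemma smul_coef2 (a b : series) :
  smul a b 2 = a 0%N * b 2%N + a 1%N * b 1%N + a 2%N * b 0%N.
Proof. by rewrite /smul !big_ord_recl big_ord0 /= addr0 addrA. Qed.

Lemma ssub_saddl (a b c : series) : ssub (sadd a b) c = sadd a (ssub b c).
Proof. by apply: functional_extensionality => i; rewrite /ssub /sadd addrA. Qed.

Lemma ssub_saddr (a b c : series) : ssub (sadd a b) (sadd a c) = ssub b c.
Proof.
by apply: functional_extensionality => i; rewrite /ssub /sadd opprD addrACA subrr add0r.
Qed.

Lemma sshift1_coef0 (a : series) : sshift 1 a 0 = 0.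
Proof. by []. Qed.

Lemma sshift1_coefS (a : series) i : sshift 1 a i.+1 = a i.
Proof. by rewrite /sshift /= subn1. Qed.

Lemma sshift0 (a : series) : sshift 0 a = a.
Proof. by apply: functional_extensionality => m; rewrite /sshift subn0. Qed.

Lemma sshift_add p q (a : series) : sshift (p + q) a = sshift p (sshift q a).
Proof.
apply: functional_extensionality => m; rewrite /sshift.
case: (leqP p m) => hp; last by rewrite ifF //; apply/negbTE; rewrite -ltnNge; lia.
by rewrite leq_subRL // subnDA.
Qed.

Lemma ssub_shift p (a b : series) : ssub (sshift p a) (sshift p b) = sshift p (ssub a b).
Proof.
apply: functional_extensionality => m; rewrite /ssub /sshift.
by case: ifP; rewrite ?subr0.
Qed.

Lemma smul_shift1l (a b : series) : smul (sshift 1 a) b = sshift 1 (smul a b).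
Proof.
apply: functional_extensionality => -[|m]; first by rewrite smul_coef0 mul0r.
rewrite /smul big_ord_recl /sshift /= mul0r add0r subn1.
by apply: eq_bigr => i _; rewrite /= subn1 subSS.
Qed.

Lemma smul_shiftl p (a b : series) : smul (sshift p a) b = sshift p (smul a b).
Proof.
elim: p => [|p IH]; first by rewrite !sshift0.
by rewrite -addn1 addnC !sshift_add smul_shift1l IH.
Qed.

Lemma smul_shift p q (a b : series) :
  smul (sshift p a) (sshift q b) = sshift (p + q) (smul a b).
Proof. by rewrite smul_shiftl smulC smul_shiftl smulC sshift_add. Qed.

Definition sdrop (e : nat) (a : series) : series := fun i => a (i + e)%N.

Lemma sshift_sdrop e (a : series) : sO e a -> sshift e (sdrop e a) = a.
Proof.
move=> a_small; apply: functional_extensionality => i; rewrite /sshift /sdrop.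
by case: leqP => [/subnK -> | /a_small ->].
Qed.

Lemma sO_sub_sadd_shift p (f X : series) : sO p (ssub f (sadd f (sshift p X))).
Proof.
move=> i lt_ip; rewrite /ssub /sadd /sshift leqNgt lt_ip.
by rewrite addr0 subrr.
Qed.

Lemma sO_sub_partial_sum p (g : nat -> C) (X : series) :
  sO (p + 2) (ssub (sadd (fser g) (sshift (p + 1) X))
                   (sadd (fpart g p) (smono (X 0%N + g (p + 1)%N) (p + 1)))).
Proof.
move=> i lt_ip2; rewrite /ssub /sadd /sshift /fpart /smono /fser.
have [le_ip | lt_pi] := leqP i p.
  rewrite ifF; last by apply/negbTE; rewrite -ltnNge; lia.
  by rewrite ifF ?addr0 ?subrr //; apply/eqP; lia.
have -> : i = (p + 1)%N by lia.
by rewrite leqnn subnn eqxx add0r [X 0%N + _]addrC subrr.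
Qed.

(* [sinv_upto a m] agrees with the inverse of [a] on the coefficients of
   index at most [m]. *)
Fixpoint sinv_upto (a : series) (m : nat) : series :=
  match m with
  | 0 => fun _ => (a 0%N)^-1
  | m'.+1 => fun i => if (i <= m')%N then sinv_upto a m' i
       else - (a 0%N)^-1 * \sum_(j < i) a j.+1 * sinv_upto a m' (i - j.+1)%N
  end.

Definition sinv (a : series) : series := fun i => sinv_upto a i i.

Lemma sinv_uptoE a m i : (i <= m)%N -> sinv_upto a m i = sinv a i.
Proof.
elim: m => [|m IH] hi; first by move: hi; rewrite leqn0 => /eqP ->.
rewrite /=; case: ifP => [/IH //|/negbT]; rewrite -ltnNge => lt_mi.
have -> : i = m.+1 by lia.
by rewrite /sinv /= ltnn.
Qed.

Lemma sinvS a m :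
  sinv a m.+1 = - (a 0%N)^-1 * \sum_(j < m.+1) a j.+1 * sinv a (m - j)%N.
Proof.
rewrite {1}/sinv /= ltnn; apply: congr1; apply: eq_bigr => j _.
by rewrite subSS sinv_uptoE // leq_subr.
Qed.

Lemma smul_sinv a : a 0%N != 0 -> smul a (sinv a) = smono 1 0.
Proof.
move=> a0; apply: functional_extensionality => -[|m].
  by rewrite smul_coef0 /sinv /= mulfV.
rewrite /smul big_ord_recl subn0 sinvS /smono /= mulrA mulrN mulfV // mulN1r.
under [X in _ + X]eq_bigr => i _ do rewrite subSS.
by rewrite addNr.
Qed.

Definition column (f : series) (m : nat) (R : nat -> series) : nat -> series :=
  fun n => sadd f (sshift (n + m) (R n)).

Section ThetaStep.

Variable R : nat -> series.

Definition rdlt n := ssub (sshift 1 (R n.+1)) (R n).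
Definition rdlt2 n := ssub (sshift 1 (rdlt n.+1)) (rdlt n).
Definition rnum n := smul (smul (rdlt n) (rdlt n.+1)) (rdlt2 n.+1).
Definition rden n :=
  ssub (sshift 1 (smul (rdlt n.+2) (rdlt2 n))) (smul (rdlt n) (rdlt2 n.+1)).
(* The next column is [T (n+1) - num/den = f + z^(n+m+1) (R (n+1) - rnum/rden)]. *)
Definition theta_rem_num n := ssub (smul (R n.+1) (rden n)) (rnum n).
Definition theta_rem n := smul (sdrop 2 (theta_rem_num n)) (sinv (rden n)).

Lemma rden_coef0 n : rden n 0 = R n 0%N * R n.+1 0%N.
Proof.
rewrite /rden /rdlt2 /rdlt /ssub !(smul_coef0, sshift1_coef0); ring.
Qed.

Lemma theta_rem_num_small n : sO 2 (theta_rem_num n).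
Proof.
rewrite /theta_rem_num /rnum /rden /rdlt2 /rdlt /ssub => -[|[|//]] _;
  rewrite ?(smul_coef0, smul_coef1, sshift1_coefS, sshift1_coef0); ring.
Qed.

Lemma theta_rem_num_coef2 n :
  theta_rem_num n 2 = R n.+3 0%N * (R n 0%N * R n.+1 0%N)
             - R n.+2 0%N * (2 * R n 0%N * R n.+2 0%N - R n.+1 0%N ^+ 2).
Proof.
rewrite /theta_rem_num /rnum /rden /rdlt2 /rdlt /ssub.
rewrite !(smul_coef0, smul_coef1, smul_coef2, sshift1_coefS, sshift1_coef0); ring.
Qed.

Lemma theta_rem_coef0 n : R n 0%N != 0 -> R n.+1 0%N != 0 ->
  theta_rem n 0 = R n.+3 0%N
    - R n.+2 0%N * (2 * R n 0%N * R n.+2 0%N - R n.+1 0%N ^+ 2) / (R n 0%N * R n.+1 0%N).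
Proof.
move=> Rn0 Rn1; rewrite /theta_rem smul_coef0 /sdrop theta_rem_num_coef2 /sinv /= rden_coef0.
by rewrite mulrBl mulfK // mulf_neq0.
Qed.

Variables (f : series) (m : nat).

Lemma dlt_column n : dlt (column f m R) n = sshift (n + m) (rdlt n).
Proof. by rewrite /dlt /column ssub_saddr addSn -addn1 sshift_add ssub_shift. Qed.

Lemma dlt2_column n : dlt2 (column f m R) n = sshift (n + m) (rdlt2 n).
Proof. by rewrite /dlt2 !dlt_column addSn -addn1 sshift_add ssub_shift. Qed.

Lemma theta_num_column n :
  theta_num (column f m R) n = sshift (3 * (n + m) + 2) (rnum n).
Proof.
rewrite /theta_num !dlt_column dlt2_column !smul_shift; congr (sshift _ _); lia.
Qed.

Lemma theta_den_column n :
  theta_den (column f m R) n = sshift (2 * (n + m) + 1) (rden n).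
Proof.
rewrite /theta_den !dlt_column !dlt2_column !smul_shift.
have -> : (n.+2 + m + (n + m) = 2 * (n + m) + 1 + 1)%N by lia.
have -> : (n + m + (n.+1 + m) = 2 * (n + m) + 1)%N by lia.
by rewrite sshift_add ssub_shift.
Qed.

Lemma theta_den_column_neq0 n : R n 0%N != 0 -> R n.+1 0%N != 0 ->
  theta_den (column f m R) n <> szero.
Proof.
move=> Rn0 Rn1 /(congr1 (fun s => s (2 * (n + m) + 1)%N)).
rewrite theta_den_column /sshift leqnn subnn rden_coef0 => /eqP.
by rewrite (negPf (mulf_neq0 Rn0 Rn1)).
Qed.

Lemma theta_column_step n : R n 0%N != 0 -> R n.+1 0%N != 0 ->
  smul (column f (m + 3) theta_rem n) (theta_den (column f m R) n)
  = ssub (smul (column f m R n.+1) (theta_den (column f m R) n))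
         (theta_num (column f m R) n).
Proof.
move=> Rn0 Rn1.
have rden_unit : smul (rden n) (sinv (rden n)) = smono 1 0.
  by rewrite smul_sinv // rden_coef0 mulf_neq0.
rewrite /column !smulDl ssub_saddl; congr (sadd _ _).
rewrite theta_den_column theta_num_column !smul_shift /theta_rem.
rewrite -smulA (smulC (sinv _)) rden_unit smul1r.
have -> : (n + (m + 3) + (2 * (n + m) + 1) = 3 * (n + m) + 2 + 2)%N by lia.
have -> : (n.+1 + m + (2 * (n + m) + 1) = 3 * (n + m) + 2)%N by lia.
by rewrite ssub_shift sshift_add sshift_sdrop //; apply: theta_rem_num_small.
Qed.

End ThetaStep.

Lemma CcoefS g k n : Ccoef g k.+1 n = Ccoef g k (n + 3)%N
  - Ccoef g k (n + 2)%N * (2 * Ccoef g k n * Ccoef g k (n + 2)%N - Ccoef g k (n + 1)%N ^+ 2)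
    / (Ccoef g k n * Ccoef g k (n + 1)%N).
Proof. by []. Qed.

Lemma Gcoef0 g n : Gcoef g 0 n = 0.
Proof. by rewrite /Gcoef /= muln0 addn0 addn1 addNr. Qed.

Lemma g_sub_Gcoef g k n : g (n + 3 * k + 1)%N - Gcoef g k n = - Ccoef g k n.
Proof. by rewrite /Gcoef opprD addrCA subrr addr0. Qed.

Lemma GcoefS g k n : Gcoef g k.+1 n = Gcoef g k (n + 3) - Fcoef g k n / Hcoef g k n.
Proof.
have shift j : (n + 3 * k + j.+1 = n + j + 3 * k + 1)%N by lia.
rewrite /Fcoef /Hcoef (shift 1%N) (shift 2%N) !g_sub_Gcoef mulrNN.
rewrite /Gcoef CcoefS (_ : n + 3 * k.+1 + 1 = n + 3 + 3 * k + 1)%N; last by lia.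
ring.
Qed.

Lemma Gcoef1 g n : Gcoef g 1 n = - g (n + 3)%N * ((g (n + 2)%N) ^+ 2
  - 2 * g (n + 1)%N * g (n + 3)%N) / (g (n + 1)%N * g (n + 2)%N).
Proof.
by rewrite GcoefS /Fcoef /Hcoef !Gcoef0 !subr0 sub0r muln0 !addn0 !mulNr.
Qed.

(* [f_n = f + z^(n+1) (- gamma_(n+1) - gamma_(n+2) z - ...)] *)
Fixpoint theta_rem_iter (g : nat -> C) (k : nat) : nat -> series :=
  match k with
  | 0 => fun n => sdrop n.+1 (sopp (fser g))
  | k'.+1 => theta_rem (theta_rem_iter g k')
  end.

Definition theta_iter (g : nat -> C) (k : nat) : nat -> series :=
  column (fser g) (3 * k + 1) (theta_rem_iter g k).

Lemma theta_iter0 g n : theta_iter g 0 n = fpart g n.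
Proof.
apply: functional_extensionality => i.
rewrite /theta_iter /column /= /sadd /sshift /sdrop /sopp /fpart /fser.
rewrite muln0 add0n addn1.
by case: leqP => [_ | lt_ni]; rewrite ?addr0 // subnK // addrN.
Qed.

Lemma theta_iterS g k :
  theta_iter g k.+1 = column (fser g) (3 * k + 1 + 3) (theta_rem (theta_rem_iter g k)).
Proof. by rewrite /theta_iter (_ : 3 * k.+1 + 1 = 3 * k + 1 + 3)%N //; lia. Qed.

Lemma theta_rem_iter_coef0 g : (forall k n, Ccoef g k n != 0) ->
  forall k n, theta_rem_iter g k n 0%N = Ccoef g k n.
Proof.
move=> hC; elim=> [|k IH] n; first by [].
by rewrite CcoefS /= theta_rem_coef0 !IH ?hC // addn1 addn2 addn3.
Qed.

Theorem mainTheorem2 (g : nat -> C)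
  (hC : forall k n : nat, Ccoef g k n != 0) :
  exists J : nat -> nat -> series,
    (* J_0^(n) = f_n(z) *)
    (forall n, J 0%N n = fpart g n) /\
    (* each step of the iterated theta algorithm is well defined in C((z)):
       the denominator is a nonzero series and the quotient, taken in the
       Laurent series field, is the power series J_{k+1}^(n) *)
    (forall k n, theta_den (J k) n <> szero /\
       smul (J k.+1 n) (theta_den (J k) n)
       = ssub (smul (J k n.+1) (theta_den (J k) n)) (theta_num (J k) n)) /\
    (forall k n,
      (* (i) *)
      (exists Rs : series,
         J k n = sadd (fser g) (sshift (n + 3 * k + 1) Rs) /\ Rs 0%N = Ccoef g k n) /\
      sO (n + 3 * k + 1) (ssub (fser g) (J k n)) /\
      (* (ii) *)
      sO (n + 3 * k + 2)
         (ssub (J k n) (sadd (fpart g (n + 3 * k)) (smono (Gcoef g k n) (n + 3 * k + 1)))) /\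
      Gcoef g 0 n = 0 /\
      Gcoef g 1 n = - g (n + 3)%N * ((g (n + 2)%N) ^+ 2 - 2 * g (n + 1)%N * g (n + 3)%N)
                    / (g (n + 1)%N * g (n + 2)%N) /\
      Gcoef g k.+1 n = Gcoef g k (n + 3) - Fcoef g k n / Hcoef g k n).
Proof.
have rem_coef0 := theta_rem_iter_coef0 g hC.
have rem_neq0 k n : theta_rem_iter g k n 0%N != 0 by rewrite rem_coef0.
exists (theta_iter g); split; first exact: theta_iter0.
split.
  move=> k n; rewrite theta_iterS; split; first exact: theta_den_column_neq0.
  exact: theta_column_step.
move=> k n; rewrite /theta_iter /column addnA.
split; first by exists (theta_rem_iter g k n).
split; first exact: sO_sub_sadd_shift.
split; first by rewrite /Gcoef -rem_coef0 -addn2; exact: sO_sub_partial_sum.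
split; first exact: Gcoef0.
split; first exact: Gcoef1.
exact: GcoefS.
Qed.
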